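(* Let $n\ge1$. (1) If $\mathrm{non}(\mathcal{N})>\mathrm{non}(\mathcal{M})$, then there exists a linear subspace of $\mathbb{R}^n$, considered as a vector space over $\mathbb{Q}$, which belongs to $\mathcal{N}\setminus\mathcal{M}$. (2) If $\mathrm{non}(\mathcal{M})>\mathrm{non}(\mathcal{N})$, then there exists a linear subspace of $\mathbb{R}^n$ over $\mathbb{Q}$ which belongs to $\mathcal{M}\setminus\mathcal{N}$.
   Context: $\mathcal{N}$ is the $\sigma$-ideal of Lebesgue null subsets of $\mathbb{R}^n$, and $\mathcal{M}$ is the $\sigma$-ideal of meager subsets of $\mathbb{R}^n$. For an ideal $\mathcal{I}$, $\mathrm{non}(\mathcal{I})=\min\{|A|:A\subseteq\mathbb{R}^n,\ A\notin\mathcal{I}\}$. *)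

From mathcomp Require Import ssreflect ssrbool ssrnat eqtype seq fintype.
From Stdlib Require Import Reals QArith.
Open Scope R_scope.

Definition Vec (n : nat) := 'I_n -> R.
Definition vset (n : nat) := Vec n -> Prop.

Definition box_vol {n : nat} (a b : Vec n) : R :=
  foldr Rmult 1 (map (fun i => b i - a i) (enum 'I_n)).

Definition in_box {n : nat} (a b : Vec n) (x : Vec n) : Prop :=
  forall i, a i <= x i <= b i.

Definition null_set {n : nat} (A : vset n) : Prop :=
  forall eps : R, 0 < eps ->
    exists a b : nat -> Vec n,
      (forall k i, a k i <= b k i) /\
      (forall x, A x -> exists k, in_box (a k) (b k) x) /\
      (forall N : nat, sum_f_R0 (fun k => box_vol (a k) (b k)) N <= eps).

Definition ball {n : nat} (x : Vec n) (r : R) (y : Vec n) : Prop :=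
  forall i, Rabs (y i - x i) < r.

Definition closure {n : nat} (A : vset n) : vset n :=
  fun x => forall r, 0 < r -> exists y, A y /\ ball x r y.

Definition interior {n : nat} (A : vset n) : vset n :=
  fun x => exists r, 0 < r /\ forall y, ball x r y -> A y.

Definition nowhere_dense {n : nat} (A : vset n) : Prop :=
  forall x, ~ interior (closure A) x.

Definition meager {n : nat} (A : vset n) : Prop :=
  exists F : nat -> vset n,
    (forall k, nowhere_dense (F k)) /\ (forall x, A x -> exists k, F k x).

Definition card_le {n : nat} (A B : vset n) : Prop :=
  exists f : Vec n -> Vec n,
    (forall x, A x -> B (f x)) /\
    (forall x y, A x -> A y -> f x = f y -> x = y).

Definition card_lt {n : nat} (A B : vset n) : Prop :=
  card_le A B /\ ~ card_le B A.

(* non(I) < non(J), for ideals given as predicates on subsets: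
   some set not in I has cardinality strictly below every set not in J.
   (This is exactly min{|A| : A notin I} < min{|B| : B notin J}.) *)
Definition non_lt {n : nat} (I J : vset n -> Prop) : Prop :=
  exists A : vset n, ~ I A /\ forall B : vset n, ~ J B -> card_lt A B.

Definition vzero (n : nat) : Vec n := fun _ => 0.
Definition vadd {n : nat} (x y : Vec n) : Vec n := fun i => x i + y i.
Definition vscale {n : nat} (c : R) (x : Vec n) : Vec n := fun i => c * x i.

Definition Q_subspace {n : nat} (V : vset n) : Prop :=
  V (vzero n) /\
  (forall x y, V x -> V y -> V (vadd x y)) /\
  (forall (q : Q) x, V x -> V (vscale (Q2R q) x)).

From mathcomp Require Import ssreflect ssrbool ssrnat eqtype seq fintype.
From Stdlib Require Import Reals QArith.
From Stdlib Require Import Classical ClassicalEpsilon FunctionalExtensionality.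
From Stdlib Require Import PropExtensionality Cantor Lra Lia Qreals.
From mathcomp Require classical_sets.
Open Scope R_scope.

(* Let non(I) < non(J) (here either I = meager, J = null or conversely), witnessed
   by a set A with A not in I and |A| < |B| for every B not in J.  The Q-linear
   span V of A is the required subspace: V contains A, so V is not in I (both
   ideals are hereditary); and if V were not in J we would get |A| < |V|, whereas
   V injects into A.

   A is uncountable (countable sets are both
   null and meager), so A contains an injective sequence, and then A * A injects
   into A ("square absorption", proved with Zorn's lemma exactly as for
   |X * X| = |X|, using the comparability of cardinals, also from Zorn).  Iterating
   a pairing function p : A * A -> A encodes every finite list of (rational,
   vector) pairs, hence every element of the span, injectively into A. *)

Definition inj_on {U V : Type} (X : U -> Prop) (Y : V -> Prop) (f : U -> V) : Prop :=
  (forall x, X x -> Y (f x)) /\ (forall x y, X x -> X y -> f x = f y -> x = y).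

Lemma injection_of_relation {U V : Type} (v0 : V) (X : U -> Prop) (R : U -> V -> Prop) :
  (forall x, X x -> exists v, R x v) ->
  (forall x x' v, R x v -> R x' v -> x = x') ->
  exists f, (forall x, X x -> R x (f x)) /\
            (forall x y, X x -> X y -> f x = f y -> x = y).
Proof.
move=> Rtot Rinj; pose f x := epsilon (inhabits v0) (R x).
have fR x : X x -> R x (f x) by move=> Xx; apply: epsilon_spec; exact: Rtot.
exists f; split=> // x y Xx Xy fxy.
by apply: (Rinj x y (f x) (fR x Xx)); rewrite fxy; exact: fR.
Qed.

Lemma pred_ext {T : Type} (A B : T -> Prop) : (forall t, A t <-> B t) -> A = B.
Proof.
by move=> AB; apply: functional_extensionality => t; apply: propositional_extensionality.
Qed.

Definition chain {T : Type} (F : (T -> Prop) -> Prop) : Prop :=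
  forall G1 G2, F G1 -> F G2 -> (forall t, G1 t -> G2 t) \/ (forall t, G2 t -> G1 t).

Definition union_of {T : Type} (F : (T -> Prop) -> Prop) : T -> Prop :=
  fun t => exists G, F G /\ G t.

Lemma chain_common {T : Type} {F : (T -> Prop) -> Prop} {a b : T} :
  chain F -> union_of F a -> union_of F b -> exists G, F G /\ G a /\ G b.
Proof.
move=> Fch [G1 [F1 G1a]] [G2 [F2 G2b]].
case: (Fch G1 G2 F1 F2) => sub.
- by exists G2; split=> //; split=> //; apply: sub.
- by exists G1; split=> //; split=> //; apply: sub.
Qed.

Lemma zorn_above {T : Type} (P : (T -> Prop) -> Prop) (G0 : T -> Prop) :
  P G0 ->
  (forall F, (forall G, F G -> P G) -> chain F -> P (union_of F)) ->
  exists G, (forall t, G0 t -> G t) /\ P G /\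
    forall G', (forall t, G t -> G' t) -> (exists t, G' t /\ ~ G t) -> ~ P G'.
Proof.
(* Maximize H for the property Q H := P (G0 u H); the predicate G0 u (union of F) is
   the union of the chain {G0} u {G0 u H | H in F}. *)
move=> PG0 Pchain.
pose Q (H : T -> Prop) := P (fun t => G0 t \/ H t).
have [|H [QH Hmax]] := @classical_sets.Zorn_bigcup T Q.
  move=> F FQ Fch.
  pose F' G := G = G0 \/ exists H, F H /\ G = (fun t => G0 t \/ H t).
  rewrite /Q; have -> : (fun t => G0 t \/ classical_sets.bigcup F (fun X => X) t) = union_of F'.
    apply: pred_ext => t; split.
    - case=> [G0t|[H FH Ht]]; first by exists G0; split; [left|].
      by exists (fun t => G0 t \/ H t); split; [right; exists H|right].
    - case=> G [[->|[H [FH ->]]] Gt]; [by left|case: Gt => [|Ht]; [by left|right]].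
      by exists H.
  apply: Pchain.
  - by move=> G [->|[H' [FH' ->]]]; last exact: FQ.
  - move=> G1 G2 [->|[H1 [F1 ->]]] [->|[H2 [F2 ->]]];
      try by [left=> t; left | right=> t; left | left].
    case: (Fch H1 H2 F1 F2) => sub; [left|right] => t [|/sub]; by [left|right].
exists (fun t => G0 t \/ H t); split; [by left|split=> // G' sub [t [G't nt]] PG'].
have G0G' : (fun t => G0 t \/ G' t) = G'.
  by apply: pred_ext => u; split=> [[G0u|//]|G'u]; [apply: sub; left|right].
apply: (Hmax G'); last by rewrite /Q G0G'.
split=> [u Hu|G'H]; first by apply: sub; right.
by apply: nt; right; apply: G'H.
Qed.

(* Comparability of cardinals: a maximal partial injection between X and Z is
   total on X or onto Z. *)
Lemma inj_on_compare {U : Type} (u0 : U) (X Z : U -> Prop) :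
  (exists h, inj_on X Z h) \/ (exists h, inj_on Z X h).
Proof.
pose partial (G : U * U -> Prop) :=
  [/\ forall x z, G (x, z) -> X x /\ Z z,
      forall x z z', G (x, z) -> G (x, z') -> z = z' &
      forall x x' z, G (x, z) -> G (x', z) -> x = x'].
have [|F Fpartial Fch|G [_ [[GXZ Gfun Ginj] Gmax]]] :=
  @zorn_above _ partial (fun _ => False).
- by split.
- split.
  + by move=> x z [G [FG Gxz]]; case: (Fpartial G FG) => GXZ _ _; exact: GXZ.
  + move=> x z z' Hz Hz'; have [G [FG [Gz Gz']]] := chain_common Fch Hz Hz'.
    by case: (Fpartial G FG) => _ Gfun _; exact: Gfun Gz Gz'.
  + move=> x x' z Hx Hx'; have [G [FG [Gx Gx']]] := chain_common Fch Hx Hx'.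
    by case: (Fpartial G FG) => _ _ Ginj; exact: Ginj Gx Gx'.
case: (classic (forall x, X x -> exists z, G (x, z))) => [Xdom|Xdom].
  left; have [f [fG finj]] := injection_of_relation u0 X (fun x z => G (x, z)) Xdom Ginj.
  by exists f; split=> // x /fG /GXZ [].
case: (classic (forall z, Z z -> exists x, G (x, z))) => [Zran|Zran].
  right; have [f [fG finj]] := injection_of_relation u0 Z (fun z x => G (x, z)) Zran
    (fun z z' x => Gfun x z z').
  by exists f; split=> // z /fG /GXZ [].
have [x0 [Xx0 nx0]] : exists x0, X x0 /\ ~ exists z, G (x0, z).
  by apply: NNPP => nx; apply: Xdom => x Xx; apply: NNPP => ?; apply: nx; exists x.
have [z0 [Zz0 nz0]] : exists z0, Z z0 /\ ~ exists x, G (x, z0).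
  by apply: NNPP => nz; apply: Zran => z Zz; apply: NNPP => ?; apply: nz; exists z.
exfalso; apply: (Gmax (fun t => G t \/ t = (x0, z0))).
- by move=> t Gt; left.
- by exists (x0, z0); split; [right|move=> G0; apply: nx0; exists z0].
split.
- by move=> x z [/GXZ //|[-> ->]].
- move=> x z z' [Gz|[ex ez]] [Gz'|[ex' ez']]; subst; try done;
    [exact: Gfun Gz Gz'|by case: nx0; eexists; eassumption..].
- move=> x x' z [Gx|[ex ez]] [Gx'|[ex' ez']]; subst; try done;
    [exact: Ginj Gx Gx'|by case: nz0; eexists; eassumption..].
Qed.

Definition enumerable {U : Type} (A : U -> Prop) : Prop :=
  exists e : nat -> U, forall x, A x -> exists k, e k = x.

Definition has_injective_seq {U : Type} (A : U -> Prop) : Prop :=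
  exists io : nat -> U, (forall k, A (io k)) /\ (forall i j, io i = io j -> i = j).

(* A set that is not covered by a sequence contains an injective sequence: pick
   successively fresh elements outside the finite prefix chosen so far. *)
Lemma enumerable_or_injective_seq {U : Type} (u0 : U) (A : U -> Prop) :
  enumerable A \/ has_injective_seq A.
Proof.
case: (classic (forall l : list U, exists x, A x /\ ~ List.In x l)) => [fresh|]; last first.
  move=> /not_all_ex_not [l covered]; left.
  exists (fun k => List.nth k l u0) => x Ax.
  have xl : List.In x l by apply: NNPP => nl; apply: covered; exists x.
  by have [k [_ <-]] := List.In_nth l x u0 xl; exists k.
right.
pose pick l := epsilon (inhabits u0) (fun x => A x /\ ~ List.In x l).
have pickS l : A (pick l) /\ ~ List.In (pick l) l.
  exact: (epsilon_spec (inhabits u0) (fun x => A x /\ ~ List.In x l) (fresh l)).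
pose fix prefix (k : nat) : list U :=
  if k is k'.+1 then (prefix k' ++ pick (prefix k') :: nil)%list else nil.
have earlier j k : (j < k)%nat -> List.In (pick (prefix j)) (prefix k).
  elim: k => [|k IH] //= jk; apply: List.in_or_app.
  case: (ltngtP j k) jk => [jk _|kj|->]; [by left; apply: IH| |by right; left].
  by rewrite ltnS leqNgt kj.
exists (fun k => pick (prefix k)); split=> [k|i j e]; first by case: (pickS (prefix k)).
case: (ltngtP i j) => [ij|ji|//]; exfalso.
- by case: (pickS (prefix j)) => _; apply; rewrite -e; apply: earlier.
- by case: (pickS (prefix i)) => _; apply; rewrite e; apply: earlier.
Qed.

Definition sq_inj {U : Type} (X : U -> Prop) (f : U -> U -> U) : Prop :=
  (forall x y, X x -> X y -> X (f x y)) /\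
  (forall x y x' y', X x -> X y -> X x' -> X y' -> f x y = f x' y' -> x = x' /\ y = y').

(* If X * X injects into X (and X has two points) and W injects into X, then
   X u W injects into X: tag elements of X by [a] and images of W by [b]. *)
Lemma merge_into {U : Type} {X W : U -> Prop} {f : U -> U -> U} {a b : U} {g : U -> U} :
  X a -> X b -> a <> b -> sq_inj X f -> inj_on W X g ->
  exists k, inj_on (fun u => X u \/ W u) X k.
Proof.
move=> Xa Xb ab [fX finj] [gX ginj].
have Wout u : X u \/ W u -> ~ X u -> W u by case.
pose k u := if excluded_middle_informative (X u) then f a u else f b (g u).
exists k; split=> [u Du|u v Du Dv]; rewrite /k.
  by case: excluded_middle_informative => Xu; apply: fX => //; apply/gX/Wout.
case: excluded_middle_informative => Xu; case: excluded_middle_informative => Xv e.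
- by case: (finj _ _ _ _ Xa Xu Xa Xv e).
- by case: ab; case: (finj _ _ _ _ Xa Xu Xb (gX _ (Wout v Dv Xv)) e).
- by case: ab; case: (finj _ _ _ _ Xb (gX _ (Wout u Du Xu)) Xa Xv e).
- have [_ guv] := finj _ _ _ _ Xb (gX _ (Wout u Du Xu)) Xb (gX _ (Wout v Dv Xv)) e.
  exact: ginj (Wout u Du Xu) (Wout v Dv Xv) guv.
Qed.

Definition image {U V : Type} (h : U -> V) (X : U -> Prop) : V -> Prop :=
  fun y => exists x, X x /\ y = h x.

(* If X * X injects into X and h is injective on X, then D * D injects into the
   copy h(X) of X, where D = X u h(X): D injects into X by [merge_into]. *)
Lemma image_square_into {U : Type} (u0 : U) {X : U -> Prop} {f : U -> U -> U}
    {h : U -> U} {a b : U} :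
  X a -> X b -> a <> b -> sq_inj X f ->
  (forall x y, X x -> X y -> h x = h y -> x = y) ->
  let D := fun u => X u \/ image h X u in
  exists F, (forall u v, D u -> D v -> image h X (F u v)) /\
    (forall u v u' v', D u -> D v -> D u' -> D v' -> F u v = F u' v' -> u = u' /\ v = v').
Proof.
move=> Xa Xb ab [fX finj] hinj D.
have [hinv [hinvX hinvinj]] := injection_of_relation u0 (image h X)
  (fun y x => X x /\ y = h x) (fun y Yy => Yy)
  (fun y y' x Ry Ry' => eq_trans (proj2 Ry) (Logic.eq_sym (proj2 Ry'))).
have [k [kX kinj]] := merge_into Xa Xb ab (conj fX finj)
  (conj (fun y Yy => proj1 (hinvX y Yy)) hinvinj).
exists (fun u v => h (f (k u) (k v))); split=> [u v Du Dv|u v u' v' Du Dv Du' Dv' e].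
  by exists (f (k u) (k v)); split => //; apply: fX; apply: kX.
have [] := finj _ _ _ _ (kX _ Du) (kX _ Dv) (kX _ Du') (kX _ Dv').
  by apply: hinj e; apply: fX; apply: kX.
by move=> /kinj -> // /kinj ->.
Qed.

(* A candidate for square absorption inside [A] is coded as a predicate [G] on
   U + (U * U) * U: its left part is a domain X <= A, its right part the graph of
   an injection f : X * X -> X.  [good A G] says exactly this. *)
Notation code U := (U + (U * U) * U)%type.

Definition dom {U : Type} (G : code U -> Prop) (x : U) : Prop := G (inl x).
Definition graph {U : Type} (G : code U -> Prop) (x y z : U) : Prop :=
  G (inr ((x, y), z)).

Definition good {U : Type} (A : U -> Prop) (G : code U -> Prop) : Prop :=
  [/\ forall x, dom G x -> A x,
      forall x y z, graph G x y z -> [/\ dom G x, dom G y & dom G z],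
      forall x y, dom G x -> dom G y -> exists z, graph G x y z,
      forall x y z z', graph G x y z -> graph G x y z' -> z = z' &
      forall x y x' y' z, graph G x y z -> graph G x' y' z -> x = x' /\ y = y'].

(* Being good is preserved by unions of chains (every clause involves at most two
   points of the union). *)
Lemma good_union {U : Type} (A : U -> Prop) (F : (code U -> Prop) -> Prop) :
  (forall G, F G -> good A G) -> chain F -> good A (union_of F).
Proof.
move=> Fgood Fch; split.
- by move=> x [G [FG Gx]]; case: (Fgood G FG) => GA _ _ _ _; exact: GA.
- move=> x y z [G [FG Gt]]; case: (Fgood G FG) => _ Grange _ _ _.
  by case: (Grange _ _ _ Gt) => Gx Gy Gz; split; exists G.
- move=> x y Hx Hy; have [G [FG [Gx Gy]]] := chain_common Fch Hx Hy.
  case: (Fgood G FG) => _ _ Gtot _ _; have [z Gz] := Gtot _ _ Gx Gy.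
  by exists z, G.
- move=> x y z z' Hz Hz'; have [G [FG [Gz Gz']]] := chain_common Fch Hz Hz'.
  by case: (Fgood G FG) => _ _ _ Gfun _; exact: Gfun Gz Gz'.
- move=> x y x' y' z Hz Hz'; have [G [FG [Gz Gz']]] := chain_common Fch Hz Hz'.
  by case: (Fgood G FG) => _ _ _ _ Ginj; exact: Ginj Gz Gz'.
Qed.

Definition seed {U : Type} (io : nat -> U) (t : code U) : Prop :=
  match t with
  | inl x => exists k, x = io k
  | inr ((x, y), z) => exists i j, [/\ x = io i, y = io j & z = io (to_nat (i, j))]
  end.

Lemma good_seed {U : Type} {A : U -> Prop} {io : nat -> U} :
  (forall k, A (io k)) -> (forall i j, io i = io j -> i = j) -> good A (seed io).
Proof.
move=> Aio io_inj; split.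
- by move=> x [k ->].
- by move=> x y z [i [j [-> -> ->]]]; split; eexists.
- by move=> x y [i ->] [j ->]; exists (io (to_nat (i, j))), i, j.
- move=> x y z z' [i [j [-> -> ->]]] [i' [j' [/io_inj <- /io_inj <- ->]]].
  by [].
- move=> x y x' y' z [i [j [-> -> ->]]] [i' [j' [-> -> /io_inj /to_nat_inj]]].
  by case=> -> ->.
Qed.

Lemma good_fun {U : Type} {A : U -> Prop} (u0 : U) {G : code U -> Prop} :
  good A G -> exists f, sq_inj (dom G) f.
Proof.
case=> _ Grange Gtot _ Ginj.
have [f' [f'G f'inj]] := injection_of_relation u0
  (fun p : U * U => dom G (fst p) /\ dom G (snd p)) (fun p z => graph G (fst p) (snd p) z)
  (fun p Dp => Gtot _ _ (proj1 Dp) (proj2 Dp))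
  (fun p p' z Gp Gp' => let: conj e1 e2 := Ginj _ _ _ _ _ Gp Gp' in
                        injective_projections p p' e1 e2).
have fG x y : dom G x -> dom G y -> graph G x y (f' (x, y)).
  by move=> Dx Dy; exact: (f'G (x, y)).
exists (fun x y => f' (x, y)); split=> [x y Dx Dy|x y x' y' Dx Dy Dx' Dy' e].
  by case: (Grange _ _ _ (fG x y Dx Dy)).
by case: (f'inj (x, y) (x', y') (conj Dx Dy) (conj Dx' Dy') e).
Qed.

(* Add the
   copy Y = h(X) to the domain and send the new pairs of (X u Y)^2 \ X^2 into Y,
   injectively by [image_square_into]; old and new values do not collide since
   X and Y are disjoint. *)
Lemma good_not_maximal {U : Type} {A : U -> Prop} (u0 : U) {G : code U -> Prop}
    {h : U -> U} {a b : U} :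
  good A G -> dom G a -> dom G b -> a <> b ->
  inj_on (dom G) (fun u => A u /\ ~ dom G u) h ->
  exists G', (forall t, G t -> G' t) /\ (exists t, G' t /\ ~ G t) /\ good A G'.
Proof.
move=> gG Da Db ab [hA hinj].
have [f fsq] := good_fun u0 gG.
have [F [FY Finj]] := image_square_into u0 Da Db ab fsq hinj.
set X := dom G in hA hinj FY Finj *; set Y := image h X in FY Finj *.
have YA y : Y y -> A y /\ ~ X y by case=> x [Xx ->]; exact: hA.
pose new (t : code U) := match t with
  | inl y => Y y
  | inr ((u, v), z) => [/\ X u \/ Y u, X v \/ Y v, ~ (X u /\ X v) & z = F u v]
  end.
exists (fun t => G t \/ new t); split; first by move=> t; left.
split; first by exists (inl (h a)); split; [right; exists a|case: (hA a Da)].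
case: gG => GA Grange Gtot Gfun Ginj; split.
- by move=> x [/GA|/YA []].
- move=> x y z [/Grange [Gx Gy Gz]|[Dx Dy _ ->]]; first by split; left.
  by split=> //; right; apply: FY.
- move=> x y Dx Dy; case: (classic (X x /\ X y)) => [[Xx Xy]|nXX].
    by have [z Gz] := Gtot _ _ Xx Xy; exists z; left.
  by exists (F x y); right.
- move=> x y z z' [Gz|[_ _ nXX ->]] [Gz'|[_ _ nXX' ->]] //; first exact: Gfun Gz Gz'.
  + by case: nXX'; case: (Grange _ _ _ Gz).
  + by case: nXX; case: (Grange _ _ _ Gz').
- move=> x y x' y' z [Gz|[Dx Dy _ ez]] [Gz'|[Dx' Dy' _ ez']]; first exact: Ginj Gz Gz'.
  + by case: (YA z) => [|_ []]; [rewrite ez'; exact: FY|case: (Grange _ _ _ Gz)].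
  + by case: (YA z) => [|_ []]; [rewrite ez; exact: FY|case: (Grange _ _ _ Gz')].
  + by apply: Finj; rewrite -?ez -?ez'.
Qed.

(* For a
   maximal good code with domain X, [good_not_maximal] and comparability show
   that A \ X injects into X, so A = X u (A \ X) injects into X. *)
Lemma square_absorption {U : Type} (A : U -> Prop) :
  has_injective_seq A -> exists p, sq_inj A p.
Proof.
move=> [io [Aio io_inj]].
have [G [seedG [gG Gmax]]] := zorn_above (good A) (seed io) (good_seed Aio io_inj) (good_union A).
have Xio k : dom G (io k) by apply: seedG; exists k.
have io01 : io 0%nat <> io 1%nat by move=> /io_inj.
have XA : forall x, dom G x -> A x by case: gG.
have [f fsq] := good_fun (io 0%nat) gG.
case: (inj_on_compare (io 0%nat) (fun u => A u /\ ~ dom G u) (dom G)) => [[g gX]|[h hX]].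
- have [k [kX kinj]] := merge_into (Xio 0%nat) (Xio 1%nat) io01 fsq gX.
  case: fsq => fX finj.
  have cover x : A x -> dom G x \/ (A x /\ ~ dom G x) by move=> Ax; case: (classic (dom G x)); [left|right].
  exists (fun x y => f (k x) (k y)); split=> [x y Ax Ay|x y x' y' Ax Ay Ax' Ay' e].
    by apply/XA/fX; apply/kX/cover.
  have [] := finj _ _ _ _ (kX _ (cover _ Ax)) (kX _ (cover _ Ay))
                 (kX _ (cover _ Ax')) (kX _ (cover _ Ay')) e.
  by move=> ekx eky; split; apply: kinj => //; apply: cover.
- have [G' [GG' [grown gG']]] := good_not_maximal (io 0%nat) gG (Xio 0%nat) (Xio 1%nat) io01 hX.
  by case: (Gmax G' GG' grown gG').
Qed.

Lemma box_vol_degenerate (n : nat) (a : Vec n) : (1 <= n)%nat -> box_vol a a = 0.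
Proof.
move=> hn; rewrite /box_vol.
have : (0 < size (enum 'I_n))%nat by rewrite size_enum_ord.
case: (enum 'I_n) => [|i s] //= _.
by rewrite Rminus_diag Rmult_0_l.
Qed.

(* Countable sets are null: cover them by degenerate boxes. *)
Lemma enumerable_null (n : nat) (A : vset n) :
  (1 <= n)%nat -> enumerable A -> null_set A.
Proof.
move=> hn [e He] eps heps; exists e, e; split; [|split].
- by move=> k i; apply: Rle_refl.
- by move=> x /He [k <-]; exists k => i; split; apply: Rle_refl.
- move=> N; suff -> : sum_f_R0 (fun k => box_vol (e k) (e k)) N = 0 by lra.
  elim: N => [|N IH] /=; first exact: box_vol_degenerate.
  by rewrite IH box_vol_degenerate // Rplus_0_l.
Qed.

(* A point of R^n (n >= 1) is nowhere dense: its closure is itself, which contains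
   no ball. *)
Lemma singleton_nowhere_dense (n : nat) (p : Vec n) :
  (1 <= n)%nat -> nowhere_dense (fun y => y = p).
Proof.
move=> hn x [r [hr Hr]].
have closure_p z : closure (fun y => y = p) z -> z = p.
  move=> Hz; apply: functional_extensionality => i; apply: NNPP => nz.
  have [y [-> /(_ i) hy]] := Hz (Rabs (p i - z i)) (Rabs_pos_lt _ (Rminus_eq_contra _ _ (not_eq_sym nz))).
  by move: hy; apply: Rlt_irrefl.
pose i0 := Ordinal hn.
pose y i := if i == i0 then x i + r / 2 else x i.
have ball_y : ball x r y.
  move=> i; rewrite /y; case: (i == i0)%B; last by rewrite Rminus_diag Rabs_R0.
  by rewrite Rplus_minus_l Rabs_right; lra.
have ball_x : ball x r x by move=> i; rewrite Rminus_diag Rabs_R0.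
have := f_equal (fun z => z i0) (closure_p _ (Hr _ ball_y)).
rewrite -(closure_p _ (Hr _ ball_x)) /y eqxx; lra.
Qed.

Lemma enumerable_meager (n : nat) (A : vset n) :
  (1 <= n)%nat -> enumerable A -> meager A.
Proof.
move=> hn [e He]; exists (fun k y => y = e k); split.
- by move=> k; apply: singleton_nowhere_dense.
- by move=> x /He [k <-]; exists k.
Qed.

Fixpoint lincomb {n : nat} (l : list (Q * Vec n)) : Vec n :=
  match l with
  | nil => vzero n
  | (q, a) :: l => vadd (vscale (Q2R q) a) (lincomb l)
  end.

Definition vectors_in {n : nat} (A : vset n) (l : list (Q * Vec n)) : Prop :=
  forall qa, List.In qa l -> A (snd qa).

Definition span {n : nat} (A : vset n) : vset n :=
  fun x => exists l, vectors_in A l /\ x = lincomb l.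

Lemma lincomb_app {n : nat} (l1 l2 : list (Q * Vec n)) :
  lincomb (l1 ++ l2) = vadd (lincomb l1) (lincomb l2).
Proof.
elim: l1 => [|[q a] l IH] /=; last rewrite IH;
  by apply: functional_extensionality => i; rewrite /vadd /vscale /vzero; ring.
Qed.

Lemma lincomb_scale {n : nat} (q : Q) (l : list (Q * Vec n)) :
  lincomb (List.map (fun qa => ((q * fst qa)%Q, snd qa)) l) = vscale (Q2R q) (lincomb l).
Proof.
elim: l => [|[r a] l IH] /=; last rewrite IH Q2R_mult;
  by apply: functional_extensionality => i; rewrite /vadd /vscale /vzero; ring.
Qed.

Lemma span_sub {n : nat} (A : vset n) (x : Vec n) : A x -> span A x.
Proof.
move=> Ax; exists ((1%Q, x) :: nil); split; first by move=> qa [<-|[]].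
apply: functional_extensionality => i; rewrite /= /vadd /vscale /vzero /Q2R /=; field.
Qed.

Lemma span_Q_subspace {n : nat} (A : vset n) : Q_subspace (span A).
Proof.
split; [|split].
- by exists nil; split=> // ? [].
- move=> x y [l1 [H1 ->]] [l2 [H2 ->]]; exists (l1 ++ l2)%list.
  split; last by rewrite lincomb_app.
  by move=> qa lqa; case: (List.in_app_or _ _ _ lqa); [apply: H1|apply: H2].
- move=> q x [l [Hl ->]]; exists (List.map (fun qa => ((q * fst qa)%Q, snd qa)) l).
  split; last by rewrite lincomb_scale.
  move=> qa lqa; have [[r a] [<- ra]] := proj1 (List.in_map_iff _ _ _) lqa.
  exact: (Hl _ ra).
Qed.

Definition encode_Q (q : Q) : nat :=
  to_nat (to_nat (Z.to_nat (Qnum q), Z.to_nat (- Qnum q)), Pos.to_nat (Qden q)).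

Lemma encode_Q_inj (q q' : Q) : encode_Q q = encode_Q q' -> q = q'.
Proof.
case: q q' => [a b] [a' b'] e.
have /pair_equal_spec [/to_nat_inj /pair_equal_spec [ea ea'] /Pos2Nat.inj eb] :=
  to_nat_inj _ _ e.
move: ea ea' eb => /= ea ea' ->.
by have -> : a = a' by lia.
Qed.

(* Given an injective sequence [io] in A and a pairing [p] on A, finite lists of
   (rational, vector of A) pairs are coded injectively into A; the length of the
   list is stored separately, so the span of A injects into A. *)
Section Encoding.
Variables (n : nat) (A : vset n) (io : nat -> Vec n) (p : Vec n -> Vec n -> Vec n).
Hypothesis Aio : forall k, A (io k).
Hypothesis io_inj : forall i j, io i = io j -> i = j.
Hypothesis psq : sq_inj A p.

Fixpoint encode (l : list (Q * Vec n)) : Vec n :=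
  match l with
  | nil => io 0%nat
  | (q, a) :: l => p (p (io (encode_Q q)) a) (encode l)
  end.

Lemma encode_in {l : list (Q * Vec n)} : vectors_in A l -> A (encode l).
Proof.
case: psq => pA _; elim: l => [|[q a] l IH] //= Hl.
have Aa : A a by apply: (Hl (q, a)); left.
have Al : A (encode l) by apply: IH => qa lqa; apply: Hl; right.
exact: (pA _ _ (pA _ _ (Aio _) Aa) Al).
Qed.

Lemma encode_inj (l1 l2 : list (Q * Vec n)) :
  vectors_in A l1 -> vectors_in A l2 -> length l1 = length l2 ->
  encode l1 = encode l2 -> l1 = l2.
Proof.
case: psq => pA pinj; elim: l1 l2 => [|[q a] l IH] [|[q' a'] l'] //= H1 H2 [el] e.
have H1' : vectors_in A l by move=> qa lqa; apply: H1; right.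
have H2' : vectors_in A l' by move=> qa lqa; apply: H2; right.
have Aa : A a by apply: (H1 (q, a)); left.
have Aa' : A a' by apply: (H2 (q', a')); left.
have [e1 e2] := pinj _ _ _ _ (pA _ _ (Aio _) Aa) (encode_in H1')
                              (pA _ _ (Aio _) Aa') (encode_in H2') e.
have [/io_inj/encode_Q_inj -> ->] := pinj _ _ _ _ (Aio _) Aa (Aio _) Aa' e1.
by rewrite (IH l' H1' H2' el e2).
Qed.

Lemma span_card_le_encoding : card_le (span A) A.
Proof.
have [L [LA Linj]] := injection_of_relation nil (span A)
  (fun x l => vectors_in A l /\ x = lincomb l) (fun x Sx => Sx)
  (fun x x' l Lx Lx' => eq_trans (proj2 Lx) (Logic.eq_sym (proj2 Lx'))).
case: psq => pA pinj.
exists (fun x => p (io (length (L x))) (encode (L x))); split.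
  by move=> x /LA [Lx _]; apply: pA => //; apply: encode_in.
move=> x y Sx Sy e; apply: Linj => //.
have [Lx _] := LA x Sx; have [Ly _] := LA y Sy.
have [/io_inj el ee] := pinj _ _ _ _ (Aio _) (encode_in Lx) (Aio _) (encode_in Ly) e.
exact: encode_inj.
Qed.

End Encoding.

Lemma span_card_le {n : nat} (A : vset n) : has_injective_seq A -> card_le (span A) A.
Proof.
move=> Aseq; have [p psq] := square_absorption A Aseq.
by case: Aseq => io [Aio io_inj]; exact: span_card_le_encoding Aio io_inj psq.
Qed.

(* The abstract argument: for hereditary I containing all countable sets,
   non(I) < non(J) yields a Q-subspace in J \ I, namely the span of a witness. *)
Lemma subspace_witness {n : nat} (I J : vset n -> Prop) :
  (forall A B : vset n, (forall x, A x -> B x) -> I B -> I A) ->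
  (forall A : vset n, enumerable A -> I A) ->
  non_lt I J -> exists V, Q_subspace V /\ J V /\ ~ I V.
Proof.
move=> Ihered Icount [A [nIA small]].
case: (enumerable_or_injective_seq (vzero n) A) => [/Icount //|Aseq].
exists (span A); split; first exact: span_Q_subspace.
split; last by move=> /(Ihered _ _ (span_sub A)).
apply: NNPP => nJ; case: (small _ nJ) => _; apply; exact: span_card_le.
Qed.

Lemma null_set_hereditary {n : nat} (A B : vset n) :
  (forall x, A x -> B x) -> null_set B -> null_set A.
Proof.
move=> AB nB eps heps; have [a [b [ab [cover sum]]]] := nB eps heps.
by exists a, b; split; [|split] => // x /AB /cover.
Qed.

Lemma meager_hereditary {n : nat} (A B : vset n) :
  (forall x, A x -> B x) -> meager B -> meager A.
Proof.
by move=> AB [F [Fnd cover]]; exists F; split=> // x /AB /cover.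
Qed.

Theorem theorem2p3 (n : nat) (hn : (1 <= n)%nat) :
  (non_lt (@meager n) (@null_set n) ->
     exists V : vset n, Q_subspace V /\ null_set V /\ ~ meager V) /\
  (non_lt (@null_set n) (@meager n) ->
     exists V : vset n, Q_subspace V /\ meager V /\ ~ null_set V).
Proof.
split; apply: subspace_witness.
- exact: meager_hereditary.
- by move=> A; apply: enumerable_meager.
- exact: null_set_hereditary.
- by move=> A; apply: enumerable_null.
Qed.
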